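(* Let $p\in(0,1)$, $\beta>0$, $\mu_P,\mu_N\in\mathbb R^d$ and let $\Sigma_P,\Sigma_N$ be symmetric positive semidefinite $d\times d$ matrices. For $\alpha\in(0,1)$ let $\pi(\alpha)=\sqrt{(1-\alpha)/\alpha}$. Consider the optimization problem $$\min_{\alpha_P,\alpha_N\in(0,1),\,w\in\mathbb R^d\setminus\{0\},\,b\in\mathbb R}\ \frac{(1-p)\alpha_N+\beta^2p\,\alpha_P}{1-\alpha_P}$$ subject to $$w^T\mu_P-b\ge\pi(\alpha_P)\sqrt{w^T\Sigma_P w},\qquad b-w^T\mu_N\ge\pi(\alpha_N)\sqrt{w^T\Sigma_N w}.$$ Then the minimal value of this problem is attained at a point where both inequality constraints hold with equality; i.e., at an optimal solution $(w^\star,b^\star,\alpha_P^\star,\alpha_N^\star)$ one has $(w^\star)^T\mu_P-b^\star=\pi(\alpha_P^\star)\sqrt{(w^\star)^T\Sigma_P w^\star}$ and $b^\star-(w^\star)^T\mu_N=\pi(\alpha_N^\star)\sqrt{(w^\star)^T\Sigma_N w^\star}$.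
   Context: $\mu_P,\Sigma_P$ and $\mu_N,\Sigma_N$ are the mean and covariance matrix of the positive and negative class, respectively; $\alpha_P$ and $\alpha_N$ play the roles of worst-case false negative and false positive rates. *)

From HB Require Import structures.
From mathcomp Require Import all_boot all_order all_algebra.
From mathcomp Require Import reals.
Set Implicit Arguments. Unset Strict Implicit. Unset Printing Implicit Defensive.
Import Order.TTheory GRing.Theory Num.Theory.
Local Open Scope ring_scope.

Definition qform (R : realType) (d : nat) (S : 'M[R]_d) (x : 'cV[R]_d) : R :=
  (x^T *m S *m x) 0 0.

Definition dotv (R : realType) (d : nat) (w mu : 'cV[R]_d) : R := (w^T *m mu) 0 0.

Definition sym_psd (R : realType) (d : nat) (S : 'M[R]_d) : Prop :=
  S^T = S /\ forall x : 'cV[R]_d, 0 <= qform S x.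

Definition piA (R : realType) (a : R) : R := Num.sqrt ((1 - a) / a).

Definition objective (R : realType) (p beta aP aN : R) : R :=
  ((1 - p) * aN + beta ^+ 2 * p * aP) / (1 - aP).

Definition feasible (R : realType) (d : nat) (muP muN : 'cV[R]_d) (SP SN : 'M[R]_d)
  (w : 'cV[R]_d) (b aP aN : R) : Prop :=
  [/\ 0 < aP < 1, 0 < aN < 1, w != 0,
      piA aP * Num.sqrt (qform SP w) <= dotv w muP - b
    & piA aN * Num.sqrt (qform SN w) <= b - dotv w muN].

From mathcomp Require Import all_boot all_order all_algebra.
From mathcomp Require Import reals.
From mathcomp Require Import lra.
Set Implicit Arguments. Unset Strict Implicit. Unset Printing Implicit Defensive.
Import Order.TTheory GRing.Theory Num.Theory.
Local Open Scope ring_scope.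

(* The objective is strictly increasing in each of alpha_P and alpha_N, while
   pi is decreasing: if a constraint is slack, the corresponding alpha can be
   lowered without losing feasibility, which strictly lowers the objective and
   contradicts optimality. *)

Lemma ltr_linear_div_1subr (R : realFieldType) (c k x y : R) :
  0 < c + k -> x < y -> y < 1 -> (c + k * x) / (1 - x) < (c + k * y) / (1 - y).
Proof.
move=> ck0 xy y1; have x1 := lt_trans xy y1.
rewrite ltr_pdivrMr ?subr_gt0 // [X in _ < X]mulrAC ltr_pdivlMr ?subr_gt0 //.
nra.
Qed.

Section Objective.
Variables (R : realType) (p beta : R).
Hypotheses (p_gt0 : 0 < p) (p_lt1 : p < 1).

Lemma objective_ltr_aP (aP' aP aN : R) : 0 < beta -> 0 <= aN ->
  aP' < aP -> aP < 1 -> objective p beta aP' aN < objective p beta aP aN.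
Proof.
move=> beta0 aN0 aP'aP aP1; apply: ltr_linear_div_1subr aP'aP aP1.
have c0 : 0 <= (1 - p) * aN by rewrite mulr_ge0 // subr_ge0 ltW.
by rewrite ltr_wpDl // mulr_gt0 ?exprn_gt0.
Qed.

Lemma objective_ltr_aN (aP aN' aN : R) :
  aP < 1 -> aN' < aN -> objective p beta aP aN' < objective p beta aP aN.
Proof.
move=> aP1 aN'aN.
by rewrite ltr_pM2r ?invr_gt0 ?subr_gt0 // ltrD2r ltr_pM2l // subr_gt0.
Qed.

End Objective.

Section PiConstraint.
Variables (R : realType) (q : R).
Hypothesis q_ge0 : 0 <= q.

Lemma piA_mul_sqrt (a : R) : 0 < a <= 1 ->
  piA a * Num.sqrt q = Num.sqrt ((1 - a) / a * q).
Proof.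
by case/andP=> a0 a1; rewrite sqrtrM // divr_ge0 ?subr_ge0 // ltW.
Qed.

Lemma piA_sqrt_le (a s : R) : 0 < a <= 1 -> 0 <= s ->
  (piA a * Num.sqrt q <= s) = (q <= a * (s ^+ 2 + q)).
Proof.
move=> /[dup] /andP[a0 _] ha s0.
rewrite piA_mul_sqrt // -[X in _ <= X](ger0_norm s0) -sqrtr_sqr ler_sqrt ?sqr_ge0 //.
by rewrite mulrAC ler_pdivrMr // mulrDr -lerBlDr mulrBl mul1r [s ^+ 2 * a]mulrC.
Qed.

Lemma piA_sqrt_lt (a s : R) : 0 < a <= 1 -> 0 < s ->
  (piA a * Num.sqrt q < s) = (q < a * (s ^+ 2 + q)).
Proof.
move=> /[dup] /andP[a0 _] ha s0.
rewrite piA_mul_sqrt // -[X in _ < X](gtr0_norm s0) -sqrtr_sqr ltr_sqrt ?exprn_gt0 //.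
by rewrite mulrAC ltr_pdivrMr // mulrDr -ltrBlDr mulrBl mul1r [s ^+ 2 * a]mulrC.
Qed.

(* The admissible alphas form the interval [q / (s^2 + q), 1): a slack
   constraint leaves room below a. *)
Lemma piA_sqrt_slack (a s : R) : 0 < a < 1 -> piA a * Num.sqrt q < s ->
  exists2 a', 0 < a' < a & piA a' * Num.sqrt q <= s.
Proof.
move=> /andP[a0 a1] slack.
have s0 : 0 < s by apply: le_lt_trans slack; rewrite mulr_ge0 ?sqrtr_ge0.
have t0 : 0 < s ^+ 2 + q by rewrite ltr_wpDr ?exprn_gt0.
have : q / (s ^+ 2 + q) < a.
  by rewrite ltr_pdivrMr // -piA_sqrt_lt ?a0 ?ltW.
move=> /midf_lt[lo hi]; set a' := (_ + a) / 2 in lo hi.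
have a'0 : 0 < a' by apply: le_lt_trans lo; rewrite divr_ge0 // ltW.
exists a'; first by rewrite a'0.
have a'1 : a' <= 1 by rewrite ltW // (lt_trans hi).
by rewrite piA_sqrt_le ?a'0 ?a'1 ?(ltW s0) // -ler_pdivrMr // ltW.
Qed.

End PiConstraint.

Theorem lemma4 (R : realType) (d : nat) (p beta : R)
  (muP muN : 'cV[R]_d) (SP SN : 'M[R]_d) :
  0 < p < 1 -> 0 < beta -> sym_psd SP -> sym_psd SN ->
  forall (w : 'cV[R]_d) (b aP aN : R),
    feasible muP muN SP SN w b aP aN ->
    (forall (w' : 'cV[R]_d) (b' aP' aN' : R),
        feasible muP muN SP SN w' b' aP' aN' ->
        objective p beta aP aN <= objective p beta aP' aN') ->
    dotv w muP - b = piA aP * Num.sqrt (qform SP w) /\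
    b - dotv w muN = piA aN * Num.sqrt (qform SN w).
Proof.
move=> /andP[p0 p1] beta0 [_ qP] [_ qN] w b aP aN [hP hN w0 cP cN] opt.
have /andP[aP0 aP1] := hP; have /andP[aN0 aN1] := hN.
split; apply/eqP; rewrite eq_le ?cP ?cN andbT leNgt; apply/negP => slack.
- have [aP' /andP[aP'0 aP'aP] cP'] := piA_sqrt_slack (qP w) hP slack.
  have : feasible muP muN SP SN w b aP' aN.
    by split; rewrite ?aP'0 ?(lt_trans aP'aP).
  by move/opt; rewrite leNgt objective_ltr_aP ?ltW.
- have [aN' /andP[aN'0 aN'aN] cN'] := piA_sqrt_slack (qN w) hN slack.
  have : feasible muP muN SP SN w b aP aN'.
    by split; rewrite ?aN'0 ?(lt_trans aN'aN).
  by move/opt; rewrite leNgt objective_ltr_aN.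
Qed.
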